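(* Let $g\colon(\mathbb R^+,0)\to(\mathbb R^+,0)$ be a germ of a $C^2$-smooth function such that $g(y)=y+R(y)$ with $R(y)=O(y^2)$, and let $h(x)=-\frac{1}{\ln x}$ (so $h^{-1}(y)=e^{-1/y}$). Then $H=h^{-1}\circ g\circ h$ (with $H(0)=0$) is $C^1$-smooth near $0$. Moreover, if $g$ depends on a parameter $\varepsilon$ and $g''$ is $C^1$-smooth in $\varepsilon$, then $H'$ is also $C^1$-smooth with respect to $\varepsilon$. *)

From Stdlib Require Export Reals.
Open Scope R_scope.

Definition I0 (d : R) : R -> Prop := fun y => 0 <= y /\ y < d.

(* f is C^1 on the set D with derivative f' (one-sided at boundary points):
   Stdlib's D_in is the derivative within D, continue_in is continuity within D. *)
Definition C1_on (D : R -> Prop) (f f' : R -> R) : Prop :=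
  (forall x, D x -> D_in f f' D x) /\ (forall x, D x -> continue_in f' D x).

Definition C2_on_with (D : R -> Prop) (f f1 f2 : R -> R) : Prop :=
  (forall x, D x -> D_in f f1 D x) /\
  (forall x, D x -> D_in f1 f2 D x) /\
  (forall x, D x -> continue_in f2 D x).

Definition bigO_sq (D : R -> Prop) (g : R -> R) : Prop :=
  exists C, forall y, D y -> Rabs (g y - y) <= C * y ^ 2.

Definition h (x : R) : R := - / ln x.
Definition hinv (y : R) : R := exp (- / y).

Definition conjH (g : R -> R) (x : R) : R :=
  if Req_EM_T x 0 then 0 else hinv (g (h x)).

Definition joint_cont_on (P D : R -> Prop) (F : R -> R -> R) : Prop :=
  forall e y, P e -> D y -> forall eps, 0 < eps -> exists eta, 0 < eta /\
    forall e' y', P e' -> D y' -> Rabs (e' - e) < eta -> Rabs (y' - y) < eta ->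
      Rabs (F e' y' - F e y) < eps.

(* With y = h x = -1 / ln x and g y = y + w(y) y^2 one has
   -1 / g y = -1 / y + w / (1 + y w), hence H x = x * exp (w / (1 + y w)) and
   H' x = g' y * exp (w / (1 + y w)) / (1 + y w)^2.  By Taylor's formula
   w(y) = (g y - y) / y^2 extends continuously to y = 0 with value g''(0) / 2, so H'
   is continuous up to x = 0, where H'(0) = exp (g''(0) / 2).  For a family g_e, the
   e-derivatives of g'_e and of w_e are the first and second primitives in y of
   d g''_e / de (differentiation under the integral sign), and the same Taylor
   estimates, made uniform in e by compactness, give joint continuity of everything
   in (e, x).  A single germ is the case of a constant family. *)

From Stdlib Require Import Reals Lra Classical ClassicalEpsilon.
From Coquelicot Require Import Coquelicot.
Open Scope R_scope.

(** * Limits within subsets of [R] and [R * R] *)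

Notation within2 P D e y :=
  (within (fun z : R * R => P (fst z) /\ D (snd z)) (locally (e, y))).

Lemma filterlim_within_eps (f : R -> R) (D : R -> Prop) (x l : R) :
  filterlim f (within D (locally x)) (locally l) <->
  forall eps, 0 < eps -> exists eta, 0 < eta /\
    forall x', D x' -> Rabs (x' - x) < eta -> Rabs (f x' - l) < eps.
Proof.
  rewrite filterlim_locally. split.
  - intros H eps Heps. destruct (H (mkposreal eps Heps)) as [[eta Heta] Hf].
    exists eta. split; [exact Heta|]. intros x' Dx' Hx'. exact (Hf x' Hx' Dx').
  - intros H [eps Heps]. destruct (H eps Heps) as [eta [Heta Hf]].
    exists (mkposreal eta Heta). intros x' Hx' Dx'. exact (Hf x' Dx' Hx').
Qed.

Lemma joint_cont_on_filterlim (P D : R -> Prop) (F : R -> R -> R) :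
  joint_cont_on P D F <->
  forall e y, P e -> D y ->
    filterlim (fun z => F (fst z) (snd z)) (within2 P D e y) (locally (F e y)).
Proof.
  split.
  - intros H e y Pe Dy. apply filterlim_locally. intros [eps Heps].
    destruct (H e y Pe Dy eps Heps) as [eta [Heta Hf]].
    exists (mkposreal eta Heta). intros [e' y'] [He Hy] [Pe' Dy']. exact (Hf e' y' Pe' Dy' He Hy).
  - intros H e y Pe Dy eps Heps.
    destruct (proj1 (filterlim_locally _ _) (H e y Pe Dy) (mkposreal eps Heps)) as [[eta Heta] Hf].
    exists eta. split; [exact Heta|]. intros e' y' Pe' Dy' He Hy.
    exact (Hf (e', y') (conj He Hy) (conj Pe' Dy')).
Qed.

Lemma joint_cont_on_sub (P P' D D' : R -> Prop) (F : R -> R -> R) :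
  (forall e, P' e -> P e) -> (forall y, D' y -> D y) ->
  joint_cont_on P D F -> joint_cont_on P' D' F.
Proof.
  intros HP HD H e y Pe Dy eps Heps. destruct (H e y (HP e Pe) (HD y Dy) eps Heps) as [eta [Heta Hf]].
  exists eta. split; [exact Heta|]. intros e' y' Pe' Dy'. apply Hf; auto.
Qed.

Lemma continue_in_filterlim (f : R -> R) (D : R -> Prop) (x : R) :
  continue_in f D x <-> filterlim f (within D (locally x)) (locally (f x)).
Proof.
  rewrite filterlim_within_eps. split.
  - intros H eps Heps. destruct (H eps Heps) as [eta [Heta Hf]].
    exists eta. split; [exact Heta|]. intros x' Dx' Hx'.
    destruct (Req_dec x' x) as [->|Hne].
    + rewrite Rminus_diag, Rabs_R0. exact Heps.
    + exact (Hf x' (conj (conj Dx' (not_eq_sym Hne)) Hx')).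
  - intros H eps Heps. destruct (H eps Heps) as [eta [Heta Hf]].
    exists eta. split; [exact Heta|]. intros x' [[Dx' _] Hx']. exact (Hf x' Dx' Hx').
Qed.

Lemma filterlim_within_sub {T} (f : R -> T) (D D' : R -> Prop) (x : R) G :
  (forall y, D' y -> D y) ->
  filterlim f (within D (locally x)) G -> filterlim f (within D' (locally x)) G.
Proof.
  intros HD H P HP. destruct (H P HP) as [eps Heps]. exists eps. intros y Hy Dy. auto.
Qed.

Lemma filterlim_locally_within (f : R -> R) (D : R -> Prop) (x l : R) :
  filterlim f (locally x) (locally l) -> filterlim f (within D (locally x)) (locally l).
Proof. intros H. exact (filterlim_filter_le_1 _ (filter_le_within D) H). Qed.

Lemma limit1_in_filterlim (f : R -> R) (D : R -> Prop) (l x : R) :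
  filterlim f (within D (locally x)) (locally l) -> limit1_in f D l x.
Proof.
  intros H eps Heps. destruct (proj1 (filterlim_within_eps _ _ _ _) H eps Heps) as [eta [Heta Hf]].
  exists eta. split; [exact Heta|]. intros x' [Dx' Hx']. exact (Hf x' Dx' Hx').
Qed.

Section LimitAlgebra.
Context {T : Type} {F : (T -> Prop) -> Prop} {FF : Filter F}.

Lemma filterlim_Rplus (f g : T -> R) (a b : R) :
  filterlim f F (locally a) -> filterlim g F (locally b) ->
  filterlim (fun z => f z + g z) F (locally (a + b)).
Proof. intros Hf Hg. eapply filterlim_comp_2; [exact Hf | exact Hg | exact (filterlim_plus a b)]. Qed.

Lemma filterlim_Rmult (f g : T -> R) (a b : R) :
  filterlim f F (locally a) -> filterlim g F (locally b) ->
  filterlim (fun z => f z * g z) F (locally (a * b)).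
Proof. intros Hf Hg. eapply filterlim_comp_2; [exact Hf | exact Hg | exact (filterlim_mult a b)]. Qed.

Lemma filterlim_Rminus (f g : T -> R) (a b : R) :
  filterlim f F (locally a) -> filterlim g F (locally b) ->
  filterlim (fun z => f z - g z) F (locally (a - b)).
Proof.
  intros Hf Hg. apply (filterlim_Rplus f (fun z => - g z)); [exact Hf|].
  eapply filterlim_comp; [exact Hg | exact (filterlim_opp b)].
Qed.

Lemma filterlim_Rinv (f : T -> R) (a : R) :
  filterlim f F (locally a) -> a <> 0 -> filterlim (fun z => / f z) F (locally (/ a)).
Proof. intros Hf Ha. eapply filterlim_comp; [exact Hf | exact (continuous_Rinv a Ha)]. Qed.

Lemma filterlim_exp (f : T -> R) (a : R) :
  filterlim f F (locally a) -> filterlim (fun z => exp (f z)) F (locally (exp a)).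
Proof. intros Hf. eapply filterlim_comp; [exact Hf | exact (continuous_exp a)]. Qed.

End LimitAlgebra.

Lemma derivable_pt_lim_val (f : R -> R) (x l l' : R) :
  l = l' -> derivable_pt_lim f x l -> derivable_pt_lim f x l'.
Proof. now intros <-. Qed.

Lemma derivable_pt_lim_filterlim (f : R -> R) (x l : R) :
  derivable_pt_lim f x l -> filterlim f (locally x) (locally (f x)).
Proof.
  intros H. apply (ex_derive_continuous (V := R_NormedModule)).
  exists l. now apply is_derive_Reals.
Qed.

Lemma D_in_I0_interior (f f' : R -> R) (d x : R) :
  0 < x < d -> D_in f f' (I0 d) x -> derivable_pt_lim f x (f' x).
Proof.
  intros Hx H eps Heps. destruct (H eps Heps) as [alp [Halp Hf]].
  assert (Hpos : 0 < Rmin alp (Rmin x (d - x))) by (repeat apply Rmin_pos; lra).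
  exists (mkposreal _ Hpos). intros k Hk0 Hk. simpl in Hk.
  assert (Hk1 := Rmin_l alp (Rmin x (d - x))). assert (Hk2 := Rmin_r alp (Rmin x (d - x))).
  assert (Hk3 := Rmin_l x (d - x)). assert (Hk4 := Rmin_r x (d - x)).
  assert (Hk' := Rabs_def2 _ _ Hk).
  specialize (Hf (x + k)). simpl in Hf. unfold R_dist in Hf.
  replace (x + k - x) with k in Hf by ring.
  apply Hf. split; [split|]; [unfold I0; lra | lra | lra].
Qed.

Lemma D_in_of_derivable (f f' : R -> R) (D : R -> Prop) (x : R) :
  derivable_pt_lim f x (f' x) -> D_in f f' D x.
Proof.
  intros H. apply (limit1_imp _ (D_x no_cond x)).
  - intros y [_ Hy]. split; [exact I | exact Hy].
  - exact (proj2 (derivable_pt_lim_D_in f f' x) H).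
Qed.

(** * Functions with a double zero at [0] *)

Lemma at_right0_eps (f : R -> R) (l : R) :
  filterlim f (at_right 0) (locally l) ->
  forall eps, 0 < eps -> exists eta, 0 < eta /\ forall t, 0 < t < eta -> Rabs (f t - l) < eps.
Proof.
  intros H eps Heps. destruct (proj1 (filterlim_within_eps f _ 0 l) H eps Heps) as [eta [Heta Hf]].
  exists eta. split; [exact Heta|]. intros t Ht. apply Hf; [lra|].
  rewrite Rminus_0_r, Rabs_pos_eq; lra.
Qed.

Lemma at_right0_of_I0 (f : R -> R) (d l : R) : 0 < d ->
  filterlim f (within (I0 d) (locally 0)) (locally l) -> filterlim f (at_right 0) (locally l).
Proof.
  intros Hd H. apply filterlim_within_eps. intros eps Heps.
  destruct (proj1 (filterlim_within_eps _ _ _ _) H eps Heps) as [eta [Heta Hf]].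
  exists (Rmin eta d). split; [apply Rmin_pos; lra|]. intros t Ht Htd.
  assert (Hm1 := Rmin_l eta d). assert (Hm2 := Rmin_r eta d).
  rewrite Rminus_0_r, Rabs_pos_eq in Htd by lra.
  apply Hf; [split; lra | rewrite Rminus_0_r, Rabs_pos_eq; lra].
Qed.

Lemma filterlim_at_right0_id : filterlim (fun t => t) (at_right 0) (locally 0).
Proof. exact (filter_le_within _). Qed.

Lemma mvt_abs_le (f f' : R -> R) (y B : R) : 0 < y ->
  (forall t, 0 < t <= y -> derivable_pt_lim f t (f' t)) ->
  (forall t, 0 < t <= y -> Rabs (f' t) <= B) ->
  filterlim f (at_right 0) (locally (f 0)) ->
  Rabs (f y - f 0) <= B * y.
Proof.
  intros Hy Hd HB Hc. apply le_epsilon. intros eps Heps.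
  destruct (at_right0_eps f _ Hc eps Heps) as [eta [Heta Hf0]].
  set (t := Rmin eta y / 2).
  assert (Ht : 0 < t < eta /\ t < y) by (unfold t; assert (Hm := Rmin_pos eta y Heta Hy);
    assert (Rmin eta y <= eta) by apply Rmin_l; assert (Rmin eta y <= y) by apply Rmin_r; lra).
  assert (HB0 : 0 <= B) by (apply Rle_trans with (Rabs (f' y)); [apply Rabs_pos | apply HB; lra]).
  destruct (MVT_gen f t y f') as [c [Hc' Hfc]].
  - intros x Hx. rewrite Rmin_left, Rmax_right in Hx by lra.
    apply is_derive_Reals, Hd. lra.
  - intros x Hx. rewrite Rmin_left, Rmax_right in Hx by lra.
    apply continuity_pt_filterlim. apply (derivable_pt_lim_filterlim _ _ (f' x)), Hd. lra.
  - rewrite Rmin_left, Rmax_right in Hc' by lra.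
    assert (Hft : Rabs (f t - f 0) < eps) by (apply Hf0; lra).
    assert (Hmvt : Rabs (f y - f t) <= B * y).
    { rewrite Hfc, Rabs_mult, (Rabs_pos_eq (y - t)) by lra.
      assert (Rabs (f' c) <= B) by (apply HB; lra).
      apply Rle_trans with (B * (y - t)); [apply Rmult_le_compat_r|]; nra. }
    replace (f y - f 0) with ((f y - f t) + (f t - f 0)) by ring.
    eapply Rle_trans; [apply Rabs_triang | lra].
Qed.

Record double_zero (D : R) (f0 f1 f2 : R -> R) : Prop := {
  dz_val0 : f0 0 = 0;
  dz_der0 : f1 0 = 0;
  dz_cont0 : filterlim f0 (at_right 0) (locally 0);
  dz_cont1 : filterlim f1 (at_right 0) (locally 0);
  dz_deriv0 : forall t, 0 < t < D -> derivable_pt_lim f0 t (f1 t);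
  dz_deriv1 : forall t, 0 < t < D -> derivable_pt_lim f1 t (f2 t)
}.

Lemma double_zero_sub (D : R) (f0 f1 f2 g0 g1 g2 : R -> R) :
  double_zero D f0 f1 f2 -> double_zero D g0 g1 g2 ->
  double_zero D (fun t => f0 t - g0 t) (fun t => f1 t - g1 t) (fun t => f2 t - g2 t).
Proof.
  intros [F0 F1 C0 C1 D0 D1] [G0 G1 E0 E1 H0 H1]. split.
  - rewrite F0, G0. ring.
  - rewrite F1, G1. ring.
  - generalize (filterlim_Rminus _ _ _ _ C0 E0). now rewrite Rminus_0_r.
  - generalize (filterlim_Rminus _ _ _ _ C1 E1). now rewrite Rminus_0_r.
  - intros t Ht. apply derivable_pt_lim_minus; auto.
  - intros t Ht. apply derivable_pt_lim_minus; auto.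
Qed.

Lemma double_zero_scal (D k : R) (f0 f1 f2 : R -> R) :
  double_zero D f0 f1 f2 ->
  double_zero D (fun t => k * f0 t) (fun t => k * f1 t) (fun t => k * f2 t).
Proof.
  intros [F0 F1 C0 C1 D0 D1]. split.
  - rewrite F0. ring.
  - rewrite F1. ring.
  - generalize (filterlim_Rmult _ _ k _ (filterlim_const k) C0). now rewrite Rmult_0_r.
  - generalize (filterlim_Rmult _ _ k _ (filterlim_const k) C1). now rewrite Rmult_0_r.
  - intros t Ht. apply (derivable_pt_lim_val _ _ (0 * f0 t + k * f1 t)); [ring|].
    apply (derivable_pt_lim_mult (fun _ => k)); [apply derivable_pt_lim_const | auto].
  - intros t Ht. apply (derivable_pt_lim_val _ _ (0 * f1 t + k * f2 t)); [ring|].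
    apply (derivable_pt_lim_mult (fun _ => k)); [apply derivable_pt_lim_const | auto].
Qed.

Lemma filterlim_at_right0_of_derivable (f : R -> R) (l : R) :
  derivable_pt_lim f 0 l -> filterlim f (at_right 0) (locally (f 0)).
Proof.
  intros H. apply filterlim_locally_within. exact (derivable_pt_lim_filterlim _ _ _ H).
Qed.

Lemma double_zero_taylor (D : R) (f0 f1 f2 : R -> R) (c eps y : R) :
  double_zero D f0 f1 f2 -> 0 <= y < D ->
  (forall t, 0 < t <= y -> Rabs (f2 t - c) <= eps) ->
  Rabs (f1 y - c * y) <= eps * y /\ Rabs (f0 y - c * y ^ 2 / 2) <= eps * y ^ 2.
Proof.
  intros [F0 F1 C0 C1 D0 D1] Hy Hb.
  destruct (Req_dec y 0) as [->|Hy0].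
  { rewrite F0, F1. split; [replace (0 - c * 0) with 0 by ring | replace (0 - c * 0 ^ 2 / 2) with 0 by field];
      rewrite Rabs_R0; nra. }
  assert (Heps : 0 <= eps) by (apply Rle_trans with (Rabs (f2 y - c)); [apply Rabs_pos | apply Hb; lra]).
  assert (Hlin : forall s, 0 < s <= y -> Rabs (f1 s - c * s) <= eps * s).
  { intros s Hs.
    assert (Hm := mvt_abs_le (fun t => f1 t - c * t) (fun t => f2 t - c) s eps).
    cbv beta in Hm. rewrite F1, Rmult_0_r, Rminus_0_r, Rminus_0_r in Hm. apply Hm.
    - lra.
    - intros t Ht. apply derivable_pt_lim_minus; [apply D1; lra|].
      apply is_derive_Reals. auto_derive; [exact I | ring].
    - intros t Ht. apply Hb. lra.
    - replace (locally 0) with (locally (0 - c * 0)) by (f_equal; ring).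
      apply filterlim_Rminus; [exact C1|].
      exact (filterlim_at_right0_of_derivable (fun t => c * t) c
               ltac:(apply is_derive_Reals; auto_derive; [exact I | ring])). }
  split; [apply Hlin; lra|].
  assert (Hm := mvt_abs_le (fun t => f0 t - c * t ^ 2 / 2) (fun t => f1 t - c * t) y (eps * y)).
  cbv beta in Hm. rewrite F0 in Hm. replace (0 - c * 0 ^ 2 / 2) with 0 in Hm by field.
  rewrite Rminus_0_r in Hm. replace (eps * y ^ 2) with (eps * y * y) by ring. apply Hm.
  - lra.
  - intros t Ht. apply derivable_pt_lim_minus; [apply D0; lra|].
    apply is_derive_Reals. auto_derive; [exact I | field].
  - intros t Ht. apply Rle_trans with (eps * t); [apply Hlin; lra | apply Rmult_le_compat_l; lra].
  - replace (locally 0) with (locally (0 - c * 0 ^ 2 / 2)) by (f_equal; field).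
    apply filterlim_Rminus; [exact C0|].
    exact (filterlim_at_right0_of_derivable (fun t => c * t ^ 2 / 2) 0
             ltac:(apply is_derive_Reals; auto_derive; [exact I | field])).
Qed.

Definition cont_I0 (D : R) (f : R -> R) : Prop :=
  forall t, I0 D t -> filterlim f (within (I0 D) (locally t)) (locally (f t)).

Lemma filterlim_to_within {T} {F : (T -> Prop) -> Prop} {FF : Filter F}
    (f : T -> R) (D : R -> Prop) (l : R) :
  filterlim f F (locally l) -> F (fun x => D (f x)) -> filterlim f F (within D (locally l)).
Proof.
  intros Hf HD P [eps HP]. unfold filtermap.
  apply (filter_imp (fun x => D (f x) /\ ball l eps (f x))).
  - intros x [Dx Bx]. exact (HP _ Bx Dx).
  - apply filter_and; [exact HD | exact (proj1 (filterlim_locally f l) Hf eps)].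
Qed.

Lemma Rmax0_continuous (z : R) : filterlim (Rmax 0) (locally z) (locally (Rmax 0 z)).
Proof.
  apply filterlim_locally. intros eps. exists eps. intros s Hs.
  change (Rabs (s - z) < eps) in Hs. change (Rabs (Rmax 0 s - Rmax 0 z) < eps).
  apply Rabs_def2 in Hs. apply Rabs_def1;
    unfold Rmax; destruct (Rle_dec 0 s), (Rle_dec 0 z); lra.
Qed.

(* The primitive from [0] of [f], with [f] frozen at [f 0] to the left of [0] so
   that the integrand is continuous at [0] from both sides. *)
Definition prim (f : R -> R) (y : R) : R := RInt (fun s => f (Rmax 0 s)) 0 y.

Lemma clamp_continuous (f : R -> R) (D z : R) :
  0 < D -> cont_I0 D f -> z < D -> continuous (fun s => f (Rmax 0 s)) z.
Proof.
  intros HD Hf Hz. assert (Hmz : I0 D (Rmax 0 z)) by (split; [apply Rmax_l | apply Rmax_lub_lt; lra]).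
  eapply filterlim_comp; [|exact (Hf _ Hmz)].
  apply filterlim_to_within; [apply Rmax0_continuous|].
  assert (Hp : 0 < D - z) by lra. exists (mkposreal _ Hp). intros s Hs.
  change (Rabs (s - z) < D - z) in Hs. apply Rabs_def2 in Hs.
  split; [apply Rmax_l | apply Rmax_lub_lt; lra].
Qed.

Lemma prim_derivable (f : R -> R) (D t : R) :
  0 < D -> cont_I0 D f -> t < D -> derivable_pt_lim (prim f) t (f (Rmax 0 t)).
Proof.
  intros HD Hf Ht. apply is_derive_Reals.
  apply (is_derive_RInt (fun s => f (Rmax 0 s)) (prim f) 0 t).
  - assert (Hp : 0 < (D - t) / 2) by lra.
    exists (mkposreal _ Hp). intros b Hb. change (Rabs (b - t) < (D - t) / 2) in Hb.
    apply Rabs_def2 in Hb.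
    apply (RInt_correct (V := R_CompleteNormedModule)), (ex_RInt_continuous (V := R_CompleteNormedModule)).
    intros z Hz. apply (clamp_continuous f D z HD Hf).
    apply Rle_lt_trans with (Rmax 0 b); [apply Hz | apply Rmax_lub_lt; lra].
  - exact (clamp_continuous f D t HD Hf Ht).
Qed.

Lemma prim_zero (f : R -> R) : prim f 0 = 0.
Proof. unfold prim. rewrite RInt_point. reflexivity. Qed.

Lemma prim_cont_I0 (f : R -> R) (D : R) : 0 < D -> cont_I0 D f -> cont_I0 D (prim f).
Proof.
  intros HD Hf t [Ht0 HtD]. apply filterlim_locally_within.
  exact (derivable_pt_lim_filterlim _ _ _ (prim_derivable f D t HD Hf HtD)).
Qed.

Lemma double_zero_prim (f : R -> R) (D : R) :
  0 < D -> cont_I0 D f -> double_zero D (prim (prim f)) (prim f) f.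
Proof.
  intros HD Hf. assert (Hpf := prim_cont_I0 f D HD Hf). split.
  - apply prim_zero.
  - apply prim_zero.
  - rewrite <- (prim_zero (prim f)) at 2.
    exact (filterlim_at_right0_of_derivable _ _ (prim_derivable _ D 0 HD Hpf HD)).
  - rewrite <- (prim_zero f) at 2.
    exact (filterlim_at_right0_of_derivable _ _ (prim_derivable _ D 0 HD Hf HD)).
  - intros t Ht. rewrite <- (Rmax_right 0 t) at 2 by lra. exact (prim_derivable _ D t HD Hpf (proj2 Ht)).
  - intros t Ht. rewrite <- (Rmax_right 0 t) at 2 by lra. exact (prim_derivable _ D t HD Hf (proj2 Ht)).
Qed.

Lemma double_zero_cont1 (D : R) (f0 f1 f2 : R -> R) :
  double_zero D f0 f1 f2 -> cont_I0 D f1.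
Proof.
  intros HF t [Ht0 HtD]. destruct (Req_dec t 0) as [->|Ht].
  - apply filterlim_within_eps. intros eps Heps.
    destruct (at_right0_eps _ _ (dz_cont1 _ _ _ _ HF) eps Heps) as [eta [Heta Hf]].
    exists eta. split; [exact Heta|]. intros t [Ht0' _] Ht'.
    rewrite (dz_der0 _ _ _ _ HF). destruct (Req_dec t 0) as [->|Hne].
    + rewrite (dz_der0 _ _ _ _ HF), Rminus_0_r, Rabs_R0. exact Heps.
    + rewrite Rminus_0_r in Ht' |- *. rewrite Rabs_pos_eq in Ht' by lra.
      rewrite <- (Rminus_0_r (f1 t)). apply Hf. lra.
  - apply filterlim_locally_within.
    exact (derivable_pt_lim_filterlim _ _ _ (dz_deriv1 _ _ _ _ HF t ltac:(lra))).
Qed.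

Definition quot_sq (f : R -> R) (l y : R) : R := if Req_EM_T y 0 then l else f y / y ^ 2.

Lemma quot_sq_0 (f : R -> R) (l : R) : quot_sq f l 0 = l.
Proof. unfold quot_sq. destruct (Req_EM_T 0 0); [reflexivity | contradiction]. Qed.

Lemma quot_sq_neq0 (f : R -> R) (l y : R) : y <> 0 -> quot_sq f l y = f y / y ^ 2.
Proof. intros Hy. unfold quot_sq. destruct (Req_EM_T y 0); [contradiction | reflexivity]. Qed.

Lemma abs_div_sq_le (X y B : R) : y <> 0 -> Rabs X <= B * y ^ 2 -> Rabs (X / y ^ 2) <= B.
Proof.
  intros Hy HX. assert (Hy2 : 0 < y ^ 2) by (apply pow2_gt_0; exact Hy).
  unfold Rdiv. rewrite Rabs_mult, (Rabs_pos_eq (/ y ^ 2)) by (apply Rlt_le, Rinv_0_lt_compat; exact Hy2).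
  apply (Rmult_le_reg_r (y ^ 2)); [exact Hy2|].
  rewrite Rmult_assoc, Rinv_l by lra. lra.
Qed.

Lemma quot_sq_cont (D : R) (f0 f1 f2 : R -> R) :
  double_zero D f0 f1 f2 -> cont_I0 D f2 -> cont_I0 D (quot_sq f0 (f2 0 / 2)).
Proof.
  intros HF Hf2 t [Ht0 HtD]. destruct (Req_dec t 0) as [->|Ht].
  - apply filterlim_within_eps. intros eps Heps.
    assert (Hc := proj1 (filterlim_within_eps _ _ _ _) (Hf2 0 ltac:(split; lra)) (eps / 2) ltac:(lra)).
    destruct Hc as [eta [Heta Hc]].
    exists eta. split; [exact Heta|]. intros y [Hy0 HyD] Hy. rewrite quot_sq_0.
    destruct (Req_dec y 0) as [->|Hne].
    { rewrite quot_sq_0, Rminus_diag, Rabs_R0. exact Heps. }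
    rewrite Rminus_0_r, Rabs_pos_eq in Hy by lra.
    destruct (double_zero_taylor D f0 f1 f2 (f2 0) (eps / 2) y HF ltac:(lra)) as [_ Ht2].
    { intros s Hs. left. apply Hc; [split; lra|]. rewrite Rminus_0_r, Rabs_pos_eq; lra. }
    rewrite quot_sq_neq0 by exact Hne.
    replace (f0 y / y ^ 2 - f2 0 / 2) with ((f0 y - f2 0 * y ^ 2 / 2) / y ^ 2) by (field; exact Hne).
    apply Rle_lt_trans with (eps / 2); [apply abs_div_sq_le; assumption | lra].
  - apply filterlim_locally_within.
    apply (filterlim_ext_loc (fun y => f0 y * / y ^ 2)).
    { assert (Hp : 0 < t) by lra. exists (mkposreal t Hp). intros y Hy.
      change (Rabs (y - t) < t) in Hy. apply Rabs_def2 in Hy.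
      rewrite quot_sq_neq0 by lra. reflexivity. }
    rewrite quot_sq_neq0 by exact Ht.
    apply filterlim_Rmult.
    + exact (derivable_pt_lim_filterlim _ _ _ (dz_deriv0 _ _ _ _ HF t ltac:(lra))).
    + apply filterlim_Rinv; [|apply pow_nonzero; exact Ht].
      exact (derivable_pt_lim_filterlim (fun y => y ^ 2) t (2 * t)
               ltac:(apply is_derive_Reals; auto_derive; [exact I | ring])).
Qed.

(** * Continuity and differentiability in a parameter *)

Definition unif_cont_param (P : R -> Prop) (D : R) (F : R -> R -> R) : Prop :=
  forall e Y, P e -> 0 <= Y < D -> forall eps, 0 < eps -> exists eta, 0 < eta /\
    forall e' t, P e' -> Rabs (e' - e) < eta -> 0 <= t <= Y -> Rabs (F e' t - F e t) < eps.

Lemma joint_cont_on_slice (P : R -> Prop) (D : R) (F : R -> R -> R) (e : R) :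
  joint_cont_on P (I0 D) F -> P e -> cont_I0 D (F e).
Proof.
  intros H Pe t Dt. apply filterlim_within_eps. intros eps Heps.
  destruct (H e t Pe Dt eps Heps) as [eta [Heta Hf]].
  exists eta. split; [exact Heta|]. intros t' Dt' Ht'.
  apply Hf; [exact Pe | exact Dt' | rewrite Rminus_diag, Rabs_R0; exact Heta | exact Ht'].
Qed.

Lemma joint_cont_on_const (P D : R -> Prop) (c : R) : joint_cont_on P D (fun _ _ => c).
Proof.
  intros e y _ _ eps Heps. exists 1. split; [lra|]. intros. rewrite Rminus_diag, Rabs_R0. exact Heps.
Qed.

Lemma joint_cont_on_snd (P D : R -> Prop) : joint_cont_on P D (fun _ y => y).
Proof. intros e y _ _ eps Heps. exists eps. split; [exact Heps|]. intros. assumption. Qed.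

Lemma joint_cont_pos_near (a b d e0 : R) (F : R -> R -> R) :
  a < e0 < b -> 0 < d -> joint_cont_on (fun e => a < e < b) (I0 d) F ->
  exists r d', 0 < r /\ a < e0 - r /\ e0 + r < b /\ 0 < d' <= d /\
    forall e y, e0 - r < e < e0 + r -> I0 d' y -> 0 < 1 + y * F e y.
Proof.
  intros He0 Hd HF.
  destruct (HF e0 0 He0 ltac:(split; lra) 1 Rlt_0_1) as [eta [Heta Hf]].
  set (K := Rabs (F e0 0) + 1).
  assert (HK : 0 < K) by (unfold K; generalize (Rabs_pos (F e0 0)); lra).
  assert (Hr := Rmin_pos eta (Rmin (e0 - a) (b - e0)) Heta ltac:(apply Rmin_pos; lra)).
  assert (Hr1 := Rmin_l eta (Rmin (e0 - a) (b - e0))). assert (Hr2 := Rmin_r eta (Rmin (e0 - a) (b - e0))).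
  assert (Hr3 := Rmin_l (e0 - a) (b - e0)). assert (Hr4 := Rmin_r (e0 - a) (b - e0)).
  assert (HiK : 0 < / K) by (apply Rinv_0_lt_compat; exact HK).
  assert (Hd' := Rmin_pos (Rmin eta d) (/ K) ltac:(apply Rmin_pos; lra) HiK).
  assert (Hd1 := Rmin_l (Rmin eta d) (/ K)). assert (Hd2 := Rmin_r (Rmin eta d) (/ K)).
  assert (Hd3 := Rmin_l eta d). assert (Hd4 := Rmin_r eta d).
  exists (Rmin eta (Rmin (e0 - a) (b - e0)) / 2), (Rmin (Rmin eta d) (/ K)).
  repeat split; try lra. intros e y He [Hy0 Hy].
  assert (HFe : Rabs (F e y) < K).
  { assert (Rabs (F e y - F e0 0) < 1)
      by (apply Hf; [lra | split; lra | apply Rabs_def1 | rewrite Rminus_0_r, Rabs_pos_eq]; lra).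
    replace (F e y) with ((F e y - F e0 0) + F e0 0) by ring.
    unfold K. eapply Rle_lt_trans; [apply Rabs_triang | lra]. }
  assert (HyK : y * K < 1).
  { apply Rlt_le_trans with (/ K * K); [apply Rmult_lt_compat_r; lra | rewrite Rinv_l; lra]. }
  assert (Hle := Rle_abs (- F e y)). rewrite Rabs_Ropp in Hle. nra.
Qed.

(* Uniformity in [t] comes from the compactness of [[0, Y]]. *)
Lemma joint_cont_unif (P : R -> Prop) (D : R) (F : R -> R -> R) :
  joint_cont_on P (I0 D) F -> unif_cont_param P D F.
Proof.
  intros H e Y Pe HY eps Heps.
  assert (Ex : forall t, exists eta, 0 < eta /\ (0 <= t <= Y ->
     forall e' t', P e' -> 0 <= t' <= Y -> Rabs (e' - e) < eta -> Rabs (t' - t) < eta ->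
       Rabs (F e' t' - F e t) < eps / 2)).
  { intros t. destruct (classic (0 <= t <= Y)) as [Ht|Ht].
    - destruct (H e t Pe ltac:(split; lra) (eps / 2) ltac:(lra)) as [eta [Heta Hf]].
      exists eta. split; [exact Heta|]. intros _ e' t' Pe' Ht'. apply Hf; [exact Pe' | split; lra].
    - exists 1. split; [lra | contradiction]. }
  destruct (choice _ Ex) as [eta Heta].
  destruct (compactness_value_1d 0 Y (fun t => mkposreal (eta t) (proj1 (Heta t)))) as [[d Hd] Hcov].
  exists d. split; [exact Hd|]. intros e' t' Pe' He' Ht'.
  apply NNPP. intros Hneg. apply (Hcov t' Ht'). intros [t [Ht [Htt' Hdt]]]. apply Hneg. simpl in *.
  destruct (Heta t) as [_ Hf].
  assert (A1 : Rabs (F e' t' - F e t) < eps / 2) by (apply Hf; auto; lra).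
  assert (A2 : Rabs (F e t' - F e t) < eps / 2)
    by (apply Hf; auto; rewrite Rminus_diag, Rabs_R0; lra).
  replace (F e' t' - F e t') with ((F e' t' - F e t) - (F e t' - F e t)) by ring.
  eapply Rle_lt_trans; [apply Rabs_triang | rewrite Rabs_Ropp; lra].
Qed.

Lemma joint_cont_of_unif (P : R -> Prop) (D : R) (F : R -> R -> R) :
  (forall e, P e -> cont_I0 D (F e)) -> unif_cont_param P D F -> joint_cont_on P (I0 D) F.
Proof.
  intros Hc Hu e y Pe [Hy0 HyD] eps Heps.
  destruct (Hu e ((y + D) / 2) Pe ltac:(lra) (eps / 2) ltac:(lra)) as [eta1 [Heta1 H1]].
  destruct (proj1 (filterlim_within_eps _ _ _ _) (Hc e Pe y ltac:(split; lra)) (eps / 2) ltac:(lra))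
    as [eta2 [Heta2 H2]].
  exists (Rmin (Rmin eta1 eta2) ((D - y) / 2)).
  split; [repeat apply Rmin_pos; lra|]. intros e' y' Pe' Dy' He' Hy'.
  assert (Hm1 := Rmin_l (Rmin eta1 eta2) ((D - y) / 2)).
  assert (Hm2 := Rmin_r (Rmin eta1 eta2) ((D - y) / 2)).
  assert (Hm3 := Rmin_l eta1 eta2). assert (Hm4 := Rmin_r eta1 eta2).
  assert (Hy'' := Rabs_def2 _ _ Hy'). destruct Dy' as [Hy'0 Hy'D].
  replace (F e' y' - F e y) with ((F e' y' - F e y') + (F e y' - F e y)) by ring.
  eapply Rle_lt_trans; [apply Rabs_triang|].
  assert (Rabs (F e' y' - F e y') < eps / 2) by (apply H1; auto; lra).
  assert (Rabs (F e y' - F e y) < eps / 2) by (apply H2; [split|]; lra).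
  lra.
Qed.

Section Family.

Variables (P : R -> Prop) (D : R) (F0 F1 F2 : R -> R -> R).
Hypothesis HF : forall e, P e -> double_zero D (F0 e) (F1 e) (F2 e).
Hypothesis HF2 : joint_cont_on P (I0 D) F2.

Lemma family_diff_bound (e e' eps y : R) : P e -> P e' -> 0 <= y < D ->
  (forall t, 0 < t <= y -> Rabs (F2 e' t - F2 e t) <= eps) ->
  Rabs (F1 e' y - F1 e y) <= eps * y /\ Rabs (F0 e' y - F0 e y) <= eps * y ^ 2.
Proof.
  intros Pe Pe' Hy Hb.
  destruct (double_zero_taylor D _ _ _ 0 eps y (double_zero_sub D _ _ _ _ _ _ (HF e' Pe') (HF e Pe)) Hy)
    as [T1 T2].
  { intros t Ht. rewrite Rminus_0_r. exact (Hb t Ht). }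
  replace (F1 e' y - F1 e y - 0 * y) with (F1 e' y - F1 e y) in T1 by ring.
  replace (F0 e' y - F0 e y - 0 * y ^ 2 / 2) with (F0 e' y - F0 e y) in T2 by field.
  split; assumption.
Qed.

Lemma family_unif_cont1 : unif_cont_param P D F1.
Proof.
  intros e Y Pe HY eps Heps.
  destruct (joint_cont_unif P D F2 HF2 e Y Pe HY (eps / (D + 1))) as [eta [Heta Hu]].
  { apply Rdiv_lt_0_compat; lra. }
  exists eta. split; [exact Heta|]. intros e' t Pe' He' Ht.
  destruct (family_diff_bound e e' (eps / (D + 1)) t Pe Pe' ltac:(lra)) as [B _].
  { intros s Hs. left. apply Hu; auto; lra. }
  apply Rle_lt_trans with (eps / (D + 1) * t); [exact B|].
  apply Rle_lt_trans with (eps / (D + 1) * D).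
  - apply Rmult_le_compat_l; [apply Rlt_le, Rdiv_lt_0_compat|]; lra.
  - apply Rlt_le_trans with (eps / (D + 1) * (D + 1));
      [apply Rmult_lt_compat_l; [apply Rdiv_lt_0_compat|]; lra|].
    right. field. lra.
Qed.

Lemma family_unif_cont_quot : unif_cont_param P D (fun e => quot_sq (F0 e) (F2 e 0 / 2)).
Proof.
  intros e Y Pe HY eps Heps.
  destruct (joint_cont_unif P D F2 HF2 e Y Pe HY (eps / 2) ltac:(lra)) as [eta [Heta Hu]].
  exists eta. split; [exact Heta|]. intros e' t Pe' He' Ht.
  destruct (Req_dec t 0) as [->|Ht0].
  - rewrite !quot_sq_0. replace (F2 e' 0 / 2 - F2 e 0 / 2) with ((F2 e' 0 - F2 e 0) / 2) by field.
    unfold Rdiv. rewrite Rabs_mult, (Rabs_pos_eq (/ 2)) by lra.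
    assert (Rabs (F2 e' 0 - F2 e 0) < eps / 2) by (apply Hu; auto; lra). lra.
  - destruct (family_diff_bound e e' (eps / 2) t Pe Pe' ltac:(lra)) as [_ B].
    { intros s Hs. left. apply Hu; auto; lra. }
    rewrite !quot_sq_neq0 by exact Ht0.
    replace (F0 e' t / t ^ 2 - F0 e t / t ^ 2) with ((F0 e' t - F0 e t) / t ^ 2) by (field; exact Ht0).
    apply Rle_lt_trans with (eps / 2); [apply abs_div_sq_le; assumption | lra].
Qed.

Lemma family_joint_cont1 : joint_cont_on P (I0 D) F1.
Proof.
  apply joint_cont_of_unif; [|exact family_unif_cont1].
  intros e Pe. exact (double_zero_cont1 _ _ _ _ (HF e Pe)).
Qed.

Lemma family_joint_cont_quot : joint_cont_on P (I0 D) (fun e => quot_sq (F0 e) (F2 e 0 / 2)).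
Proof.
  apply joint_cont_of_unif; [|exact family_unif_cont_quot].
  intros e Pe. exact (quot_sq_cont _ _ _ _ (HF e Pe) (joint_cont_on_slice _ _ _ e HF2 Pe)).
Qed.

End Family.

Lemma mvt_open_interval (f f' : R -> R) (a b x x' : R) :
  (forall z, a < z < b -> derivable_pt_lim f z (f' z)) -> a < x < b -> a < x' < b ->
  exists z, a < z < b /\ Rabs (z - x) <= Rabs (x' - x) /\ f x' - f x = f' z * (x' - x).
Proof.
  intros Hf Hx Hx'.
  assert (Hmin : a < Rmin x x') by (apply Rmin_glb_lt; lra).
  assert (Hmax : Rmax x x' < b) by (apply Rmax_lub_lt; lra).
  assert (Hmin' := Rmin_l x x'). assert (Hmin'' := Rmin_r x x').
  assert (Hmax' := Rmax_l x x'). assert (Hmax'' := Rmax_r x x').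
  destruct (MVT_gen f x x' f') as [z [Hz Hfz]].
  - intros y Hy. apply is_derive_Reals, Hf. lra.
  - intros y Hy. apply continuity_pt_filterlim.
    apply (derivable_pt_lim_filterlim _ _ (f' y)), Hf. lra.
  - exists z. split; [lra|]. split; [|exact Hfz].
    unfold Rmin, Rmax in Hz. destruct (Rle_dec x x'); [rewrite !Rabs_pos_eq | rewrite !Rabs_left1]; lra.
Qed.

(* A local bound on [Fe] near [(e, y)] makes [F] Lipschitz in the parameter there. *)
Lemma joint_cont_of_param_deriv (a b D : R) (F Fe : R -> R -> R) :
  (forall e, a < e < b -> cont_I0 D (F e)) ->
  (forall e t, a < e < b -> I0 D t -> derivable_pt_lim (fun e' => F e' t) e (Fe e t)) ->
  joint_cont_on (fun e => a < e < b) (I0 D) Fe ->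
  joint_cont_on (fun e => a < e < b) (I0 D) F.
Proof.
  intros Hc Hd Hj e y He Hy eps Heps.
  destruct (Hj e y He Hy 1 Rlt_0_1) as [eta1 [Heta1 H1]].
  set (B := Rabs (Fe e y) + 1).
  assert (HB : 0 < B) by (unfold B; generalize (Rabs_pos (Fe e y)); lra).
  destruct (proj1 (filterlim_within_eps _ _ _ _) (Hc e He y Hy) (eps / 2) ltac:(lra))
    as [eta2 [Heta2 H2]].
  exists (Rmin (Rmin eta1 eta2) (eps / (2 * B))).
  split; [repeat apply Rmin_pos; try apply Rdiv_lt_0_compat; lra|].
  intros e' y' He' Hy' Hee Hyy.
  assert (Hm1 := Rmin_l (Rmin eta1 eta2) (eps / (2 * B))).
  assert (Hm2 := Rmin_r (Rmin eta1 eta2) (eps / (2 * B))).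
  assert (Hm3 := Rmin_l eta1 eta2). assert (Hm4 := Rmin_r eta1 eta2).
  destruct (mvt_open_interval (fun e => F e y') (fun e => Fe e y') a b e e') as [z [Hz [Hze Hmvt]]];
    [intros z Hz; apply Hd; assumption | exact He | exact He' |].
  assert (HFe : Rabs (Fe z y') <= B).
  { assert (Rabs (Fe z y' - Fe e y) < 1) by (apply H1; auto; lra).
    replace (Fe z y') with ((Fe z y' - Fe e y) + Fe e y) by ring.
    unfold B. eapply Rle_trans; [apply Rabs_triang | lra]. }
  assert (Hpar : Rabs (F e' y' - F e y') < eps / 2).
  { rewrite Hmvt, Rabs_mult. apply Rle_lt_trans with (B * Rabs (e' - e)).
    - apply Rmult_le_compat_r; [apply Rabs_pos | exact HFe].
    - apply Rlt_le_trans with (B * (eps / (2 * B))); [apply Rmult_lt_compat_l; lra|].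
      right. field. lra. }
  assert (Rabs (F e y' - F e y) < eps / 2) by (apply H2; [exact Hy' | lra]).
  replace (F e' y' - F e y) with ((F e' y' - F e y') + (F e y' - F e y)) by ring.
  eapply Rle_lt_trans; [apply Rabs_triang | lra].
Qed.

Lemma derivable_pt_lim_of_remainder (f : R -> R) (a b x l : R) : a < x < b ->
  (forall eps, 0 < eps -> exists eta, 0 < eta /\ forall x', a < x' < b -> Rabs (x' - x) < eta ->
     Rabs (f x' - f x - (x' - x) * l) <= Rabs (x' - x) * eps) ->
  derivable_pt_lim f x l.
Proof.
  intros Hx H eps Heps. destruct (H (eps / 2) ltac:(lra)) as [eta [Heta Hf]].
  assert (Hp : 0 < Rmin eta (Rmin (x - a) (b - x))) by (repeat apply Rmin_pos; lra).
  assert (Hm1 := Rmin_l eta (Rmin (x - a) (b - x))). assert (Hm2 := Rmin_r eta (Rmin (x - a) (b - x))).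
  assert (Hm3 := Rmin_l (x - a) (b - x)). assert (Hm4 := Rmin_r (x - a) (b - x)).
  exists (mkposreal _ Hp). intros k Hk0 Hk. simpl in Hk. assert (Hk' := Rabs_def2 _ _ Hk).
  assert (Hr := Hf (x + k)). replace (x + k - x) with k in Hr by ring.
  specialize (Hr ltac:(lra) ltac:(lra)).
  replace ((f (x + k) - f x) / k - l) with ((f (x + k) - f x - k * l) / k) by (field; exact Hk0).
  unfold Rdiv. rewrite Rabs_mult, Rabs_inv.
  assert (Hk'' : 0 < Rabs k) by (apply Rabs_pos_lt; exact Hk0).
  apply (Rmult_lt_reg_r (Rabs k)); [exact Hk''|].
  rewrite Rmult_assoc, Rinv_l by lra. nra.
Qed.

Section ParamDeriv.

Variables (a b D : R) (F0 F1 F2 F2e : R -> R -> R).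
Hypothesis HD : 0 < D.
Hypothesis HF : forall e, a < e < b -> double_zero D (F0 e) (F1 e) (F2 e).
Hypothesis HF2e : forall e t, a < e < b -> I0 D t ->
  derivable_pt_lim (fun e' => F2 e' t) e (F2e e t).
Hypothesis HF2e_cont : joint_cont_on (fun e => a < e < b) (I0 D) F2e.

(* Differentiating twice under the integral sign, with the remainder controlled by
   the uniform continuity of [F2e] in the parameter. *)
Lemma param_remainder (e y : R) : a < e < b -> 0 <= y < D ->
  forall eps, 0 < eps -> exists eta, 0 < eta /\ forall e', a < e' < b -> Rabs (e' - e) < eta ->
    Rabs (F1 e' y - F1 e y - (e' - e) * prim (F2e e) y) <= Rabs (e' - e) * eps * y /\
    Rabs (F0 e' y - F0 e y - (e' - e) * prim (prim (F2e e)) y) <= Rabs (e' - e) * eps * y ^ 2.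
Proof.
  intros He Hy eps Heps.
  destruct (joint_cont_unif _ D F2e HF2e_cont e y He Hy eps Heps) as [eta [Heta Hu]].
  exists eta. split; [exact Heta|]. intros e' He' Hee.
  assert (Hdz := double_zero_sub D _ _ _ _ _ _ (double_zero_sub D _ _ _ _ _ _ (HF e' He') (HF e He))
                   (double_zero_scal D (e' - e) _ _ _
                      (double_zero_prim (F2e e) D HD (joint_cont_on_slice _ D F2e e HF2e_cont He)))).
  destruct (double_zero_taylor D _ _ _ 0 (Rabs (e' - e) * eps) y Hdz Hy) as [T1 T2]; cbv beta in *.
  - intros t Ht.
    destruct (mvt_open_interval (fun e => F2 e t) (fun e => F2e e t) a b e e') as [z [Hz [Hze Hmvt]]];
      [intros z Hz; apply HF2e; [exact Hz | split; lra] | exact He | exact He' |].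
    rewrite Rminus_0_r, Hmvt.
    replace (F2e z t * (e' - e) - (e' - e) * F2e e t) with ((e' - e) * (F2e z t - F2e e t)) by ring.
    rewrite Rabs_mult. apply Rmult_le_compat_l; [apply Rabs_pos|].
    left. apply Hu; [exact Hz | lra | lra].
  - rewrite Rmult_0_l, Rminus_0_r in T1.
    replace (0 * y ^ 2 / 2) with 0 in T2 by field. rewrite Rminus_0_r in T2.
    split; assumption.
Qed.

Lemma param_derivable1 (e y : R) : a < e < b -> I0 D y ->
  derivable_pt_lim (fun e' => F1 e' y) e (prim (F2e e) y).
Proof.
  intros He [Hy0 HyD]. apply (derivable_pt_lim_of_remainder _ a b); [exact He|]. intros eps Heps.
  destruct (param_remainder e y He ltac:(lra) (eps / (D + 1))) as [eta [Heta Hr]].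
  { apply Rdiv_lt_0_compat; lra. }
  exists eta. split; [exact Heta|]. intros e' He' Hee. destruct (Hr e' He' Hee) as [R1 _].
  eapply Rle_trans; [exact R1|]. rewrite Rmult_assoc. apply Rmult_le_compat_l; [apply Rabs_pos|].
  apply Rle_trans with (eps / (D + 1) * (D + 1)).
  - apply Rmult_le_compat_l; [apply Rlt_le, Rdiv_lt_0_compat|]; lra.
  - right. field. lra.
Qed.

Lemma param_derivable_quot (e y : R) : a < e < b -> I0 D y ->
  derivable_pt_lim (fun e' => quot_sq (F0 e') (F2 e' 0 / 2) y) e
    (quot_sq (prim (prim (F2e e))) (F2e e 0 / 2) y).
Proof.
  intros He [Hy0 HyD]. destruct (Req_dec y 0) as [->|Hy].
  - apply (derivable_pt_lim_ext (fun e' => F2 e' 0 * / 2));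
      [intros e'; rewrite quot_sq_0; reflexivity|].
    rewrite quot_sq_0. apply (derivable_pt_lim_val _ _ (F2e e 0 * / 2 + F2 e 0 * 0)); [field|].
    apply (derivable_pt_lim_mult (fun e' => F2 e' 0) (fun _ => / 2));
      [apply HF2e; [exact He | split; lra] | apply derivable_pt_lim_const].
  - apply (derivable_pt_lim_of_remainder _ a b); [exact He|]. intros eps Heps.
    destruct (param_remainder e y He ltac:(lra) eps Heps) as [eta [Heta Hr]].
    exists eta. split; [exact Heta|]. intros e' He' Hee. destruct (Hr e' He' Hee) as [_ R0].
    rewrite !quot_sq_neq0 by exact Hy.
    replace (F0 e' y / y ^ 2 - F0 e y / y ^ 2 - (e' - e) * (prim (prim (F2e e)) y / y ^ 2))
      with ((F0 e' y - F0 e y - (e' - e) * prim (prim (F2e e)) y) / y ^ 2) by (field; exact Hy).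
    apply abs_div_sq_le; [exact Hy | exact R0].
Qed.

End ParamDeriv.

(** * The chart [h] *)

(* Junk values: [ln 0 = 0] and [/ 0 = 0]. *)
Lemma h_0 : h 0 = 0.
Proof.
  assert (Hln : ln 0 = 0).
  { unfold ln. destruct (Rlt_dec 0 0) as [H0|_]; [destruct (Rlt_irrefl 0 H0) | reflexivity]. }
  unfold h. rewrite Hln, Rinv_0. ring.
Qed.

Lemma h_bounds (d x : R) : 0 < d -> 0 < x < exp (- / d) -> 0 < h x < d.
Proof.
  intros Hd Hx. assert (Hl : ln x < - / d).
  { rewrite <- (ln_exp (- / d)). apply ln_increasing; lra. }
  assert (Hi : 0 < / d) by (apply Rinv_0_lt_compat; exact Hd).
  unfold h. replace (- / ln x) with (/ - ln x) by (field; lra).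
  split; [apply Rinv_0_lt_compat; lra|].
  rewrite <- (Rinv_inv d). apply Rinv_lt_contravar; nra.
Qed.

Lemma exp_neg_inv_lt1 (d : R) : 0 < d -> exp (- / d) < 1.
Proof.
  intros Hd. rewrite <- exp_0. apply exp_increasing.
  assert (0 < / d) by (apply Rinv_0_lt_compat; exact Hd). lra.
Qed.

Lemma h_I0 (d x : R) : 0 < d -> I0 (exp (- / d)) x -> I0 d (h x).
Proof.
  intros Hd [Hx0 Hx]. destruct (Req_dec x 0) as [->|Hne].
  - rewrite h_0. split; lra.
  - assert (H := h_bounds d x Hd ltac:(lra)). split; lra.
Qed.

Lemma hinv_h (x : R) : 0 < x < 1 -> hinv (h x) = x.
Proof.
  intros Hx. assert (Hl : ln x < 0) by (rewrite <- ln_1; apply ln_increasing; lra).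
  unfold hinv, h. rewrite Rinv_opp, Rinv_inv, Ropp_involutive. apply exp_ln. lra.
Qed.

Lemma h_derivable (x : R) : 0 < x < 1 -> derivable_pt_lim h x (h x ^ 2 / x).
Proof.
  intros Hx. assert (Hl : ln x < 0) by (rewrite <- ln_1; apply ln_increasing; lra).
  apply is_derive_Reals. unfold h. auto_derive; [repeat split; lra | field; lra].
Qed.

Lemma hinv_derivable (u : R) : u <> 0 -> derivable_pt_lim hinv u (hinv u / u ^ 2).
Proof. intros Hu. apply is_derive_Reals. unfold hinv. auto_derive; [exact Hu | field; exact Hu]. Qed.

Lemma h_cont (d x : R) : 0 < d -> I0 (exp (- / d)) x ->
  filterlim h (within (I0 (exp (- / d))) (locally x)) (within (I0 d) (locally (h x))).
Proof.
  intros Hd Hx. assert (H1 := exp_neg_inv_lt1 d Hd).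
  apply filterlim_to_within; [|exists (mkposreal 1 Rlt_0_1); intros x' _ Hx'; exact (h_I0 d x' Hd Hx')].
  destruct Hx as [Hx0 Hxd]. destruct (Req_dec x 0) as [->|Hne].
  - apply filterlim_within_eps. intros eps Heps. rewrite h_0.
    exists (exp (- / eps)). split; [apply exp_pos|]. intros x' [Hx'0 Hx'd] Hx'.
    rewrite Rminus_0_r, Rabs_pos_eq in Hx' by lra. rewrite Rminus_0_r.
    destruct (Req_dec x' 0) as [->|Hne'].
    + rewrite h_0, Rabs_R0. exact Heps.
    + assert (H := h_bounds eps x' Heps ltac:(lra)). rewrite Rabs_pos_eq; lra.
  - apply filterlim_locally_within.
    exact (derivable_pt_lim_filterlim _ _ _ (h_derivable x ltac:(lra))).
Qed.

Lemma cont_I0_comp_h (d : R) (f : R -> R) (x : R) : 0 < d -> cont_I0 d f -> I0 (exp (- / d)) x ->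
  filterlim (fun x => f (h x)) (within (I0 (exp (- / d))) (locally x)) (locally (f (h x))).
Proof.
  intros Hd Hf Hx. eapply filterlim_comp; [exact (h_cont d x Hd Hx) | exact (Hf _ (h_I0 d x Hd Hx))].
Qed.

Lemma filterlim_fst_h (P : R -> Prop) (d e x : R) : 0 < d -> I0 (exp (- / d)) x ->
  filterlim (fun z : R * R => (fst z, h (snd z)))
    (within2 P (I0 (exp (- / d))) e x) (within2 P (I0 d) e (h x)).
Proof.
  intros Hd Hx Q [eps HQ].
  assert (Hh := filterlim_filter_le_2 _ (filter_le_within _) (h_cont d x Hd Hx)).
  destruct (proj1 (filterlim_within_eps _ _ _ _) Hh eps (cond_pos eps)) as [eta [Heta Hf]].
  assert (Hp : 0 < Rmin eps eta) by (apply Rmin_pos; [apply cond_pos | exact Heta]).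
  assert (Hm1 := Rmin_l eps eta). assert (Hm2 := Rmin_r eps eta).
  exists (mkposreal _ Hp). intros [e' x'] [He Hx'] [Pe Dx]. simpl in *.
  change (Rabs (e' - e) < Rmin eps eta) in He. change (Rabs (x' - x) < Rmin eps eta) in Hx'.
  apply HQ; [split|split]; simpl.
  - change (Rabs (e' - e) < eps). lra.
  - change (Rabs (h x' - h x) < eps). apply Hf; [exact Dx | lra].
  - exact Pe.
  - exact (h_I0 d x' Hd Dx).
Qed.

Lemma joint_cont_comp_h (P : R -> Prop) (d : R) (F : R -> R -> R) (e x : R) :
  0 < d -> joint_cont_on P (I0 d) F -> P e -> I0 (exp (- / d)) x ->
  filterlim (fun z => F (fst z) (h (snd z))) (within2 P (I0 (exp (- / d))) e x) (locally (F e (h x))).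
Proof.
  intros Hd HF He Hx.
  apply (filterlim_comp _ _ _ (fun z : R * R => (fst z, h (snd z))) (fun z => F (fst z) (snd z)) _ _ _
           (filterlim_fst_h P d e x Hd Hx)).
  exact (proj1 (joint_cont_on_filterlim P (I0 d) F) HF e (h x) He (h_I0 d x Hd Hx)).
Qed.

(** * The conjugate [H] and its derivative *)

Lemma hinv_mul_one_plus (y u : R) : y <> 0 -> 1 + y * u <> 0 ->
  hinv (y * (1 + y * u)) = hinv y * exp (u / (1 + y * u)).
Proof.
  intros Hy Hs. unfold hinv. rewrite <- exp_plus. f_equal. field. split; assumption.
Qed.

(* [A y u] is [H'(x)/g'(y)] for [y = h x] and [g y = y + u y ^ 2]. *)
Definition A (y u : R) : R := exp (u / (1 + y * u)) / (1 + y * u) ^ 2.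

Definition A' (y u : R) : R :=
  exp (u / (1 + y * u)) * (/ (1 + y * u) ^ 4 - 2 * y / (1 + y * u) ^ 3).

Lemma A_derivable (y u : R) : 1 + y * u <> 0 -> derivable_pt_lim (A y) u (A' y u).
Proof.
  intros Hs. apply is_derive_Reals. unfold A, A'. auto_derive.
  - repeat split; repeat apply Rmult_integral_contrapositive_currified; (exact Hs || lra).
  - unfold Rdiv. field. exact Hs.
Qed.

Lemma A_0 (u : R) : A 0 u = exp u.
Proof.
  unfold A. replace (1 + 0 * u) with 1 by ring.
  unfold Rdiv. rewrite Rinv_1, pow1, Rinv_1, !Rmult_1_r. reflexivity.
Qed.

Section JointLimits.
Context {T : Type} {F : (T -> Prop) -> Prop} {FF : Filter F}.

Lemma filterlim_A (f g : T -> R) (y u : R) :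
  filterlim f F (locally y) -> filterlim g F (locally u) -> 1 + y * u <> 0 ->
  filterlim (fun z => A (f z) (g z)) F (locally (A y u)).
Proof.
  intros Hf Hg Hs. unfold A, Rdiv.
  assert (H1 : filterlim (fun z => 1 + f z * g z) F (locally (1 + y * u)))
    by (apply filterlim_Rplus; [apply filterlim_const | apply filterlim_Rmult; assumption]).
  apply filterlim_Rmult.
  - apply filterlim_exp, filterlim_Rmult; [exact Hg | apply filterlim_Rinv; assumption].
  - apply filterlim_Rinv; [|apply pow_nonzero; exact Hs].
    simpl. repeat apply filterlim_Rmult; try assumption. apply filterlim_const.
Qed.

Lemma filterlim_A' (f g : T -> R) (y u : R) :
  filterlim f F (locally y) -> filterlim g F (locally u) -> 1 + y * u <> 0 ->
  filterlim (fun z => A' (f z) (g z)) F (locally (A' y u)).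
Proof.
  intros Hf Hg Hs. unfold A', Rdiv.
  assert (H1 : filterlim (fun z => 1 + f z * g z) F (locally (1 + y * u)))
    by (apply filterlim_Rplus; [apply filterlim_const | apply filterlim_Rmult; assumption]).
  apply filterlim_Rmult;
    [apply filterlim_exp, filterlim_Rmult; [exact Hg | apply filterlim_Rinv; assumption]|].
  apply filterlim_Rminus.
  - apply filterlim_Rinv; [|apply pow_nonzero; exact Hs].
    simpl. repeat apply filterlim_Rmult; try assumption. apply filterlim_const.
  - apply filterlim_Rmult; [apply filterlim_Rmult; [apply filterlim_const | exact Hf]|].
    apply filterlim_Rinv; [|apply pow_nonzero; exact Hs].
    simpl. repeat apply filterlim_Rmult; try assumption. apply filterlim_const.
Qed.

End JointLimits.

Definition dconjH (g g1 : R -> R) (l x : R) : R :=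
  g1 (h x) * A (h x) (quot_sq (fun y => g y - y) l (h x)).

Section Conjugation.

Variables (g g1 : R -> R) (l d : R).
Let w := quot_sq (fun y => g y - y) l.
Hypothesis Hd : 0 < d.
Hypothesis Hg1_0 : g1 0 = 1.
Hypothesis Hg : forall y, 0 < y < d -> derivable_pt_lim g y (g1 y).
Hypothesis Hg1 : cont_I0 d g1.
Hypothesis Hw : cont_I0 d w.
Hypothesis Hpos : forall y, I0 d y -> 0 < 1 + y * w y.

Lemma g_eq_w (y : R) : y <> 0 -> g y = y * (1 + y * w y).
Proof. intros Hy. unfold w. rewrite quot_sq_neq0 by exact Hy. field. exact Hy. Qed.

Lemma conjH_eq (x : R) : 0 < x < exp (- / d) ->
  conjH g x = x * exp (w (h x) / (1 + h x * w (h x))).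
Proof.
  intros Hx. assert (H1 := exp_neg_inv_lt1 d Hd). assert (Hy := h_bounds d x Hd Hx).
  assert (Hs := Hpos (h x) ltac:(split; lra)).
  unfold conjH. destruct (Req_EM_T x 0) as [E|_]; [lra|].
  rewrite g_eq_w, hinv_mul_one_plus, hinv_h by lra. reflexivity.
Qed.

Lemma conjH_derivable (x : R) : 0 < x < exp (- / d) ->
  derivable_pt_lim (conjH g) x (dconjH g g1 l x).
Proof.
  intros Hx. assert (H1 := exp_neg_inv_lt1 d Hd). assert (Hy := h_bounds d x Hd Hx).
  set (y := h x) in *. assert (Hs := Hpos y ltac:(split; lra)).
  assert (HG : g y = y * (1 + y * w y)) by (apply g_eq_w; lra).
  assert (HG0 : g y <> 0) by (rewrite HG; apply Rmult_integral_contrapositive_currified; lra).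
  apply (derivable_pt_lim_locally_ext (fun t => hinv (g (h t))) _ x 0 1); [lra| |].
  { intros z Hz. unfold conjH. destruct (Req_EM_T z 0); [lra | reflexivity]. }
  eapply derivable_pt_lim_val;
    [|exact (derivable_pt_lim_comp h (fun u => hinv (g u)) x _ _ (h_derivable x ltac:(lra))
              (derivable_pt_lim_comp g hinv y _ _ (Hg y ltac:(lra)) (hinv_derivable _ HG0)))].
  assert (Hhy : hinv y = x) by (apply hinv_h; lra).
  unfold dconjH. fold y. fold w. unfold A.
  rewrite HG, hinv_mul_one_plus, Hhy by lra. field. repeat split; lra.
Qed.

Lemma conjH_D_in_0 : D_in (conjH g) (dconjH g g1 l) (I0 (exp (- / d))) 0.
Proof.
  assert (H1 := exp_neg_inv_lt1 d Hd). assert (Hx0 : I0 (exp (- / d)) 0) by (split; [lra | apply exp_pos]).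
  apply limit1_in_filterlim.
  apply (filterlim_within_ext _ (fun x => exp (w (h x) * / (1 + h x * w (h x))))).
  { intros x [[Hx0' Hx] Hne]. rewrite conjH_eq by lra.
    unfold conjH. destruct (Req_EM_T 0 0) as [_|C]; [|lra]. unfold Rdiv. field. lra. }
  replace (dconjH g g1 l 0) with (exp (w (h 0) * / (1 + h 0 * w (h 0)))).
  2:{ unfold dconjH. fold w. rewrite h_0, Hg1_0, A_0, Rmult_0_l, Rplus_0_r, Rinv_1, Rmult_1_r. ring. }
  apply (filterlim_within_sub _ (I0 (exp (- / d)))); [intros x [Hx _]; exact Hx|].
  assert (Hh := filterlim_filter_le_2 _ (filter_le_within _) (h_cont d 0 Hd Hx0)).
  assert (Hwh := cont_I0_comp_h d w 0 Hd Hw Hx0).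
  apply filterlim_exp, filterlim_Rmult; [exact Hwh|].
  apply filterlim_Rinv; [apply filterlim_Rplus; [apply filterlim_const | apply filterlim_Rmult; assumption]|].
  rewrite h_0. lra.
Qed.

Lemma dconjH_cont : cont_I0 (exp (- / d)) (dconjH g g1 l).
Proof.
  intros x Hx. unfold dconjH. fold w.
  apply filterlim_Rmult; [exact (cont_I0_comp_h d g1 x Hd Hg1 Hx)|].
  apply filterlim_A.
  - exact (filterlim_filter_le_2 _ (filter_le_within _) (h_cont d x Hd Hx)).
  - exact (cont_I0_comp_h d w x Hd Hw Hx).
  - apply Rgt_not_eq, Hpos, h_I0; assumption.
Qed.

Lemma conjH_C1 : C1_on (I0 (exp (- / d))) (conjH g) (dconjH g g1 l).
Proof.
  split.
  - intros x Hx. destruct (Req_dec x 0) as [->|Hne]; [exact conjH_D_in_0|].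
    apply D_in_of_derivable, conjH_derivable. destruct Hx. lra.
  - intros x Hx. apply continue_in_filterlim, dconjH_cont, Hx.
Qed.

End Conjugation.

(** * Families of germs *)

Lemma cont_I0_sub (d d' : R) (f : R -> R) : d' <= d -> cont_I0 d f -> cont_I0 d' f.
Proof.
  intros Hd Hf t [Ht0 Ht]. apply (filterlim_within_sub _ (I0 d)); [intros y [Hy0 Hy]; split; lra|].
  apply Hf. split; lra.
Qed.

Lemma C2_cont2 (d : R) (g g1 g2 : R -> R) : C2_on_with (I0 d) g g1 g2 -> cont_I0 d g2.
Proof. intros [_ [_ H]] t Ht. apply continue_in_filterlim, H, Ht. Qed.

Lemma C2_cont1 (d : R) (g g1 g2 : R -> R) : C2_on_with (I0 d) g g1 g2 -> cont_I0 d g1.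
Proof. intros [_ [H _]] t Ht. apply continue_in_filterlim. exact (cont_deriv _ _ _ _ (H t Ht)). Qed.

Lemma bigO_deriv0 (d : R) (g g1 : R -> R) :
  0 < d -> g 0 = 0 -> D_in g g1 (I0 d) 0 -> bigO_sq (I0 d) g -> g1 0 = 1.
Proof.
  intros Hd Hg0 HD [C HC].
  apply (single_limit (fun x => (g x - g 0) / (x - 0)) (D_x (I0 d) 0) _ _ 0); [|exact HD|].
  - intros alp Halp. exists (Rmin alp d / 2).
    assert (Hm := Rmin_pos alp d Halp Hd). assert (Hm1 := Rmin_l alp d). assert (Hm2 := Rmin_r alp d).
    split; [split; [split|]; lra|]. unfold R_dist. rewrite Rminus_0_r, Rabs_pos_eq; lra.
  - intros eps Heps. assert (HC1 : 0 < Rabs C + 1) by (generalize (Rabs_pos C); lra).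
    exists (Rmin d (eps / (Rabs C + 1))). split; [apply Rmin_pos; [lra | apply Rdiv_lt_0_compat; lra]|].
    intros x [[[Hx0 HxD] Hne] Hx]. simpl in Hx |- *. unfold R_dist in Hx |- *.
    assert (Hm1 := Rmin_l d (eps / (Rabs C + 1))). assert (Hm2 := Rmin_r d (eps / (Rabs C + 1))).
    rewrite Rminus_0_r, Rabs_pos_eq in Hx by lra.
    rewrite Hg0, !Rminus_0_r. replace (g x / x - 1) with ((g x - x) / x) by (field; lra).
    unfold Rdiv. rewrite Rabs_mult, (Rabs_pos_eq (/ x)) by (apply Rlt_le, Rinv_0_lt_compat; lra).
    apply (Rmult_lt_reg_r x); [lra|]. rewrite Rmult_assoc, Rinv_l, Rmult_1_r by lra.
    assert (HB : Rabs (g x - x) <= Rabs C * x ^ 2).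
    { eapply Rle_trans; [apply HC; split; lra|].
      apply Rmult_le_compat_r; [apply pow2_ge_0 | apply RRle_abs]. }
    assert (Rabs C * x < eps).
    { apply Rle_lt_trans with ((Rabs C + 1) * x); [nra|].
      apply Rlt_le_trans with ((Rabs C + 1) * (eps / (Rabs C + 1))); [apply Rmult_lt_compat_l; lra|].
      right. field. lra. }
    simpl in HB. nra.
Qed.

Lemma double_zero_C2 (d : R) (g g1 g2 : R -> R) :
  0 < d -> g 0 = 0 -> g1 0 = 1 -> C2_on_with (I0 d) g g1 g2 ->
  double_zero d (fun y => g y - y) (fun y => g1 y - 1) g2.
Proof.
  intros Hd Hg0 Hg10 [D0 [D1 _]].
  assert (Hc : forall f f', D_in f f' (I0 d) 0 -> filterlim f (at_right 0) (locally (f 0))).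
  { intros f f' Hf. apply (at_right0_of_I0 _ d _ Hd).
    apply continue_in_filterlim. exact (cont_deriv _ _ _ _ Hf). }
  split.
  - rewrite Hg0. ring.
  - rewrite Hg10. ring.
  - replace (locally 0) with (locally (g 0 - 0)) by (rewrite Hg0; f_equal; ring).
    apply filterlim_Rminus; [exact (Hc _ _ (D0 0 ltac:(split; lra))) | exact filterlim_at_right0_id].
  - replace (locally 0) with (locally (g1 0 - 1)) by (rewrite Hg10; f_equal; ring).
    apply filterlim_Rminus; [exact (Hc _ _ (D1 0 ltac:(split; lra))) | apply filterlim_const].
  - intros t Ht. apply derivable_pt_lim_minus; [|apply derivable_pt_lim_id].
    apply (D_in_I0_interior _ _ d); [exact Ht | apply D0; split; lra].
  - intros t Ht. apply (derivable_pt_lim_val _ _ (g2 t - 0)); [ring|].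
    apply derivable_pt_lim_minus; [|apply derivable_pt_lim_const].
    apply (D_in_I0_interior _ _ d); [exact Ht | apply D1; split; lra].
Qed.

Definition dconjH_param (g g1 g2 g2e : R -> R -> R) (e x : R) : R :=
  prim (g2e e) (h x) * A (h x) (quot_sq (fun y => g e y - y) (g2 e 0 / 2) (h x)) +
  g1 e (h x) * (A' (h x) (quot_sq (fun y => g e y - y) (g2 e 0 / 2) (h x)) *
                quot_sq (prim (prim (g2e e))) (g2e e 0 / 2) (h x)).

Section Param.

Variables (a b d : R) (g g1 g2 g2e : R -> R -> R).
Hypothesis Hd : 0 < d.
Hypothesis Hg : forall e, a < e < b ->
  (forall y, I0 d y -> 0 <= g e y) /\ g e 0 = 0 /\
  C2_on_with (I0 d) (g e) (g1 e) (g2 e) /\ bigO_sq (I0 d) (g e).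
Hypothesis Hder : forall e y, a < e < b -> I0 d y ->
  derivable_pt_lim (fun e' => g2 e' y) e (g2e e y).
Hypothesis Hjc : joint_cont_on (fun e => a < e < b) (I0 d) g2e.

Local Notation P := (fun e => a < e < b).
Local Notation w := (fun e => quot_sq (fun y => g e y - y) (g2 e 0 / 2)).

Lemma param_g1_0 (e : R) : P e -> g1 e 0 = 1.
Proof.
  intros He. destruct (Hg e He) as [_ [Hg0 [HC2 HO]]].
  exact (bigO_deriv0 d (g e) (g1 e) Hd Hg0 (proj1 HC2 0 ltac:(split; lra)) HO).
Qed.

Lemma param_double_zero (e : R) : P e ->
  double_zero d (fun y => g e y - y) (fun y => g1 e y - 1) (g2 e).
Proof.
  intros He. destruct (Hg e He) as [_ [Hg0 [HC2 _]]].
  exact (double_zero_C2 d _ _ _ Hd Hg0 (param_g1_0 e He) HC2).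
Qed.

Lemma param_double_zero_prim (e : R) : P e ->
  double_zero d (prim (prim (g2e e))) (prim (g2e e)) (g2e e).
Proof. intros He. exact (double_zero_prim _ d Hd (joint_cont_on_slice _ _ _ e Hjc He)). Qed.

Lemma param_joint_cont_g2 : joint_cont_on P (I0 d) g2.
Proof.
  apply (joint_cont_of_param_deriv a b d g2 g2e); [|exact Hder | exact Hjc].
  intros e He. destruct (Hg e He) as [_ [_ [HC2 _]]]. exact (C2_cont2 _ _ _ _ HC2).
Qed.

Lemma param_joint_cont_g1 : joint_cont_on P (I0 d) g1.
Proof.
  intros e y He Hy eps Heps.
  destruct (family_joint_cont1 P d _ _ g2 param_double_zero param_joint_cont_g2 e y He Hy eps Heps)
    as [eta [Heta Hf]].
  exists eta. split; [exact Heta|]. intros e' y' He' Hy' Hee Hyy.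
  replace (g1 e' y' - g1 e y) with ((g1 e' y' - 1) - (g1 e y - 1)) by ring. apply Hf; assumption.
Qed.

Lemma param_joint_cont_w : joint_cont_on P (I0 d) w.
Proof. exact (family_joint_cont_quot P d _ _ g2 param_double_zero param_joint_cont_g2). Qed.

Lemma param_joint_cont_pe : joint_cont_on P (I0 d) (fun e => prim (g2e e)).
Proof. exact (family_joint_cont1 P d _ _ g2e param_double_zero_prim Hjc). Qed.

Lemma param_joint_cont_we :
  joint_cont_on P (I0 d) (fun e => quot_sq (prim (prim (g2e e))) (g2e e 0 / 2)).
Proof. exact (family_joint_cont_quot P d _ _ g2e param_double_zero_prim Hjc). Qed.

Lemma param_derivable_dconjH (e x d' : R) : P e -> 0 < d' <= d -> I0 (exp (- / d')) x ->
  0 < 1 + h x * w e (h x) ->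
  derivable_pt_lim (fun e' => dconjH (g e') (g1 e') (g2 e' 0 / 2) x) e (dconjH_param g g1 g2 g2e e x).
Proof.
  intros He Hd' Hx Hs.
  assert (Hy : I0 d (h x)) by (destruct (h_I0 d' x ltac:(lra) Hx); split; lra).
  set (y := h x) in *.
  assert (Hg1 : derivable_pt_lim (fun e' => g1 e' y) e (prim (g2e e) y)).
  { apply (derivable_pt_lim_ext (fun e' => (g1 e' y - 1) + 1)); [intros; ring|].
    apply (derivable_pt_lim_val _ _ (prim (g2e e) y + 0)); [ring|].
    apply derivable_pt_lim_plus; [|apply derivable_pt_lim_const].
    exact (param_derivable1 a b d _ _ g2 g2e Hd param_double_zero Hder Hjc e y He Hy). }
  assert (Hw := param_derivable_quot a b d _ _ g2 g2e Hd param_double_zero Hder Hjc e y He Hy).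
  unfold dconjH, dconjH_param. fold y.
  exact (derivable_pt_lim_mult (fun e' => g1 e' y) (fun e' => A y (w e' y)) e _ _ Hg1
           (derivable_pt_lim_comp (fun e' => w e' y) (A y) e _ _ Hw (A_derivable y _ (Rgt_not_eq _ _ Hs)))).
Qed.

Lemma param_joint_cont_dconjH (Q : R -> Prop) (d' : R) : 0 < d' <= d -> (forall e, Q e -> P e) ->
  (forall e y, Q e -> I0 d' y -> 0 < 1 + y * w e y) ->
  joint_cont_on Q (I0 (exp (- / d'))) (dconjH_param g g1 g2 g2e).
Proof.
  intros Hd' HQ Hpos. apply joint_cont_on_filterlim. intros e x He Hx.
  assert (K : forall F, joint_cont_on P (I0 d) F ->
    filterlim (fun z => F (fst z) (h (snd z))) (within2 Q (I0 (exp (- / d'))) e x) (locally (F e (h x)))).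
  { intros F HF. apply (joint_cont_comp_h Q d'); [lra| |exact He|exact Hx].
    apply (joint_cont_on_sub P Q (I0 d) (I0 d') F HQ); [intros t [Ht0 Ht]; split; lra | exact HF]. }
  assert (Hs : 1 + h x * w e (h x) <> 0) by (apply Rgt_not_eq, Hpos, h_I0; [exact He | lra | exact Hx]).
  assert (Hh := K _ (joint_cont_on_snd P (I0 d))). cbv beta in Hh.
  assert (Hw := K _ param_joint_cont_w). cbv beta in Hw.
  unfold dconjH_param. apply filterlim_Rplus; apply filterlim_Rmult.
  - exact (K _ param_joint_cont_pe).
  - exact (filterlim_A _ _ _ _ Hh Hw Hs).
  - exact (K _ param_joint_cont_g1).
  - apply filterlim_Rmult; [exact (filterlim_A' _ _ _ _ Hh Hw Hs) | exact (K _ param_joint_cont_we)].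
Qed.

Lemma conjH_param_local (e0 : R) : a < e0 < b ->
  exists r d', 0 < r /\ a < e0 - r /\ e0 + r < b /\ 0 < d' /\
  exists Hd Hde : R -> R -> R,
    (forall e, e0 - r < e < e0 + r -> C1_on (I0 d') (conjH (g e)) (Hd e)) /\
    (forall e x, e0 - r < e < e0 + r -> I0 d' x ->
       derivable_pt_lim (fun e' => Hd e' x) e (Hde e x)) /\
    joint_cont_on (fun e => e0 - r < e < e0 + r) (I0 d') Hde.
Proof.
  intros He0.
  destruct (joint_cont_pos_near a b d e0 w He0 Hd param_joint_cont_w)
    as [r [d' [Hr [Har [Hrb [Hd' Hpos]]]]]].
  exists r, (exp (- / d')). do 4 (split; [lra || apply exp_pos|]).
  exists (fun e => dconjH (g e) (g1 e) (g2 e 0 / 2)), (dconjH_param g g1 g2 g2e).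
  split; [|split].
  - intros e He. assert (HeP : P e) by lra. destruct (Hg e HeP) as [_ [_ [HC2 _]]].
    apply conjH_C1; [lra | exact (param_g1_0 e HeP) | | | |].
    + intros y Hy. apply (D_in_I0_interior _ _ d); [lra | apply (proj1 HC2); split; lra].
    + exact (cont_I0_sub d d' _ (proj2 Hd') (C2_cont1 _ _ _ _ HC2)).
    + exact (cont_I0_sub d d' _ (proj2 Hd') (joint_cont_on_slice _ _ _ e param_joint_cont_w HeP)).
    + intros y Hy. exact (Hpos e y He Hy).
  - intros e x He Hx. apply (param_derivable_dconjH e x d'); [lra | exact Hd' | exact Hx |].
    apply Hpos; [exact He | apply h_I0; [lra | exact Hx]].
  - apply param_joint_cont_dconjH; [exact Hd' | intros e He; lra | exact Hpos].
Qed.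

End Param.

Theorem proposition1 :
  (* Part 1: H is C^1 near 0 (on some [0, d')). *)
  (forall (g : R -> R) (d : R), 0 < d ->
     (forall y, I0 d y -> 0 <= g y) -> g 0 = 0 ->
     (exists g1 g2 : R -> R, C2_on_with (I0 d) g g1 g2) ->
     bigO_sq (I0 d) g ->
     exists d', 0 < d' /\ exists H' : R -> R, C1_on (I0 d') (conjH g) H')
  /\
  (* Part 2: dependence on a parameter e in the open interval (a, b). *)
  (forall (a b d : R) (g g1 g2 g2e : R -> R -> R), a < b -> 0 < d ->
     (forall e, a < e < b ->
        (forall y, I0 d y -> 0 <= g e y) /\ g e 0 = 0 /\
        C2_on_with (I0 d) (g e) (g1 e) (g2 e) /\ bigO_sq (I0 d) (g e)) ->
     (* g'' is C^1 in e: its e-derivative g2e exists and is jointly continuous *)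
     (forall e y, a < e < b -> I0 d y ->
        derivable_pt_lim (fun e' => g2 e' y) e (g2e e y)) ->
     joint_cont_on (fun e => a < e < b) (I0 d) g2e ->
     forall e0, a < e0 < b ->
       exists r d', 0 < r /\ a < e0 - r /\ e0 + r < b /\ 0 < d' /\
       exists Hd Hde : R -> R -> R,
         (forall e, e0 - r < e < e0 + r -> C1_on (I0 d') (conjH (g e)) (Hd e)) /\
         (forall e x, e0 - r < e < e0 + r -> I0 d' x ->
            derivable_pt_lim (fun e' => Hd e' x) e (Hde e x)) /\
         joint_cont_on (fun e => e0 - r < e < e0 + r) (I0 d') Hde).
Proof.
  split.
  - intros g d Hd Hnn Hg0 [g1 [g2 HC2]] HO.
    destruct (conjH_param_local (-1) 1 d (fun _ => g) (fun _ => g1) (fun _ => g2) (fun _ _ => 0) Hd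
                (fun _ _ => conj Hnn (conj Hg0 (conj HC2 HO)))
                (fun _ _ _ _ => derivable_pt_lim_const _ _) (joint_cont_on_const _ _ 0) 0 ltac:(lra))
      as [r [d' [Hr [_ [_ [Hd' [Hc [_ [HC1 _]]]]]]]]].
    exists d'. split; [exact Hd'|]. exists (Hc 0). apply HC1. lra.
  - intros a b d g g1 g2 g2e _ Hd Hg Hder Hjc e0 He0.
    exact (conjH_param_local a b d g g1 g2 g2e Hd Hg Hder Hjc e0 He0).
Qed.
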